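(* Let $M\geq 1$, $P=4M-3$, and let $x\in\ell(\mathbb{Z}_P)$ be nonzero with $x[p]=0$ for all $p=M,\ldots,4M-4$. Let $q\in\{0,\ldots,M-1\}$ be the largest index with $x[q]\neq0$. Then the largest index $p\in\{0,\ldots,2M-2\}$ with $\operatorname{CirAut}(x+Rx)[p]\neq0$ is $p=2q$.
   Context: $\ell(\mathbb{Z}_P)$ denotes the space of $P$-periodic functions $u\colon\mathbb{Z}\to\mathbb{C}$, with inner product $\langle u,v\rangle=\sum_{p\in\mathbb{Z}_P}u[p]\overline{v[p]}$. The translation operator is $(T^pu)[p']:=u[p'-p]$ and the reversal operator is $(Ru)[p]:=u[-p]$. The circular autocorrelation is $\operatorname{CirAut}(u)[p]:=\langle u,T^pu\rangle=\sum_{p'\in\mathbb{Z}_P}u[p']\overline{u[p'-p]}$. *)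

From mathcomp Require Import all_boot all_order all_algebra.
From mathcomp Require Import complex.
Set Implicit Arguments. Unset Strict Implicit. Unset Printing Implicit Defensive.
Import Order.TTheory GRing.Theory Num.Theory.
Local Open Scope ring_scope.

(* A signal u : int -> C is an element of l(Z_P) when it is P-periodic. *)
Definition periodic (C : Type) (P : nat) (u : int -> C) : Prop :=
  forall p : int, u (p + P%:Z) = u p.

Definition transl (C : Type) (p : int) (u : int -> C) : int -> C :=
  fun p' => u (p' - p).

Definition rev_sig (C : Type) (u : int -> C) : int -> C := fun p => u (- p).

Definition inner (R : rcfType) (P : nat) (u v : int -> R[i]) : R[i] :=
  \sum_(p < P) u (p%:Z) * (v (p%:Z))^*.

Definition CirAut (R : rcfType) (P : nat) (u : int -> R[i]) (p : int) : R[i] :=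
  inner P u (transl p u).

From mathcomp Require Import all_boot all_order all_algebra.
From mathcomp Require Import complex zify.
Set Implicit Arguments. Unset Strict Implicit. Unset Printing Implicit Defensive.
Import Order.TTheory GRing.Theory Num.Theory.
Local Open Scope ring_scope.

(* Modulo P, x is supported on {0, ..., q}, so y = x + Rx is supported on the
   centered window {-q, ..., q}.  A term y[k] conj(y[k - p]) of CirAut(y)[p] can
   only be nonzero when both k and k - p lie in that window: for 2q < p < P - 2q
   this never happens, and for p = 2q (with 4q < P) only k = q survives, leaving
   |y[q]|^2.  Finally y[q] = x[q] + x[-q] with x[-q] = 0 when q > 0, while
   y[0] = 2 x[0]. *)

Lemma periodicMz (C : Type) (N : nat) (u : int -> C) :
  periodic N u -> forall k p : int, u (p + k * N) = u p.
Proof.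
move=> u_periodic.
have periodicMn (n : nat) (r : int) : u (r + n%:Z * N) = u r.
  elim: n => [|n IHn]; first by rewrite mul0r addr0.
  by rewrite -[n.+1]addn1 PoszD mulrDl mul1r addrA u_periodic.
case=> n p; first exact: periodicMn.
by rewrite -(periodicMn n.+1) NegzE mulNr addrNK.
Qed.

Lemma periodic_modz (C : Type) (N : nat) (u : int -> C) :
  periodic N u -> forall p : int, u p = u (p %% N)%Z.
Proof. by move=> u_periodic p; rewrite {1}(divz_eq p N) addrC periodicMz. Qed.

Lemma modz_wrap (d : nat) (a : int) : (- d%:Z <= a < d%:Z)%Z ->
  (0 <= a)%Z /\ (a %% d)%Z = a \/ (a < 0)%Z /\ (a %% d)%Z = a + d%:Z.
Proof.
move=> a_bounded; have [a_lt0|a_ge0] := ltrP a 0; [right|left]; split=> //.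
  by rewrite -modzDr modz_small //; lia.
by rewrite modz_small //; lia.
Qed.

Definition near_zero_mod (N q : nat) (p : int) : Prop :=
  (p %% N <= q%:Z)%Z \/ (N%:Z - q%:Z <= p %% N)%Z.

Definition centered_support (R : rcfType) (N q : nat) (u : int -> R[i]) : Prop :=
  forall p : int, u p != 0 -> near_zero_mod N q p.

Section CenteredSupport.

Variables (R : rcfType) (N q : nat) (u : int -> R[i]).
Hypothesis u_supp : centered_support N q u.

Lemma centered_support_term_eq0 (k p : int) :
  ~ (near_zero_mod N q k /\ near_zero_mod N q (k - p)) ->
  u k * (u (k - p))^* = 0.
Proof.
move=> not_both.
have [-> | /u_supp k_near] := eqVneq (u k) 0; first by rewrite mul0r.
have [-> | /u_supp kp_near] := eqVneq (u (k - p)) 0; first by rewrite conjC0 mulr0.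
by case: not_both.
Qed.

Lemma CirAut_centered_support_eq0 (p : int) :
  (2 * q%:Z < p < N%:Z - 2 * q%:Z)%Z -> CirAut N u p = 0.
Proof.
move=> p_mid; apply: big1 => -[k /= k_lt_N] _; apply: centered_support_term_eq0.
rewrite /near_zero_mod; have := @modz_wrap N k; have := @modz_wrap N (k%:Z - p); lia.
Qed.

Lemma CirAut_centered_support_lag2 :
  (4 * q < N)%N -> CirAut N u (2 * q)%N%:Z = u q%:Z * (u (- q%:Z))^*.
Proof.
move=> qN; have q_lt_N : (q < N)%N by lia.
rewrite /CirAut /inner /transl (bigD1 (Ordinal q_lt_N)) //= big1 ?addr0.
  by congr (_ * (u _)^*); lia.
move=> -[k /= k_lt_N] k_neq_q; apply: centered_support_term_eq0.
have {}k_neq_q : k <> q by move=> e; move/eqP: k_neq_q; apply; apply: val_inj.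
rewrite /near_zero_mod; have := @modz_wrap N k; have := @modz_wrap N (k%:Z - (2 * q)%N%:Z).
lia.
Qed.

End CenteredSupport.

Lemma periodic_support_modz (C : nzRingType) (N q : nat) (u : int -> C) :
  (0 < N)%N -> periodic N u -> (forall n : nat, (q < n < N)%N -> u n%:Z = 0) ->
  forall p : int, u p != 0 -> (p %% N <= q%:Z)%Z.
Proof.
move=> N_gt0 u_periodic u_zero p.
rewrite (periodic_modz u_periodic); apply: contraR => p_far.
have -> : (p %% N)%Z = absz (p %% N)%Z by lia.
by apply/eqP; apply: u_zero; lia.
Qed.

Lemma rev_sum_centered_support (R : rcfType) (N q : nat) (u : int -> R[i]) :
  (0 < N)%N -> (forall p : int, u p != 0 -> (p %% N <= q%:Z)%Z) ->
  centered_support N q (fun p => u p + rev_sig u p).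
Proof.
move=> N_gt0 u_supp p; rewrite /near_zero_mod.
have [up0 | /u_supp p_near] := eqVneq (u p) 0; last by left.
rewrite up0 add0r => /u_supp; rewrite -modzNm.
have := @modz_wrap N (- (p %% N)%Z); lia.
Qed.

Theorem lemma3 (R : rcfType) (M : nat) (x : int -> R[i])
  (hM : (1 <= M)%N)
  (hper : periodic (4 * M - 3) x)
  (hnz : exists p : int, x p != 0)
  (hzero : forall p : nat, (M <= p <= 4 * M - 4)%N -> x (p%:Z) = 0)
  (q : nat) (hqM : (q < M)%N) (hq : x (q%:Z) != 0)
  (hqmax : forall r : nat, (q < r < M)%N -> x (r%:Z) = 0) :
  let y := fun p => x p + rev_sig x p in
  CirAut (4 * M - 3) y ((2 * q)%N%:Z) != 0 /\
  (forall p : nat, (2 * q < p <= 2 * M - 2)%N ->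
     CirAut (4 * M - 3) y (p%:Z) = 0).
Proof.
move=> y; have N_gt0 : (0 < 4 * M - 3)%N by lia.
have x_supp : forall p : int, x p != 0 -> (p %% (4 * M - 3)%N <= q%:Z)%Z.
  apply: periodic_support_modz => // n /andP[q_lt_n n_lt_N].
  by case: (ltnP n M) => n_M; [apply: hqmax | apply: hzero]; lia.
have y_supp : centered_support (4 * M - 3) q y.
  exact: rev_sum_centered_support.
split; last first.
  by move=> p p_range; apply: (CirAut_centered_support_eq0 y_supp); lia.
rewrite CirAut_centered_support_lag2 //; last by lia.
rewrite /y /rev_sig opprK [x (- q%:Z) + _]addrC mulf_eq0 conjC_eq0 orbb.
have [q0 | q_gt0] := posnP q.
  by move: hq; rewrite q0 oppr0 -mulr2n mulrn_eq0.
have -> : x (- q%:Z) = 0.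
  apply/eqP; apply: contraT => /x_supp.
  by have := @modz_wrap (4 * M - 3) (- q%:Z); lia.
by rewrite addr0.
Qed.
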